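(* Let $G\colon\mathsf{Nom}\to\mathsf{Nom}$ be $GX=2\times X^{\mathbb{A}}\times[\mathbb{A}]X$. The terminal $G$-coalgebra is the nominal set $\mathcal{P}_{\mathsf{fs}}(\overline{\mathbb{A}}^*/{=_\alpha})$ of all bar languages with the structure $\tau(S)=(b,\,a\mapsto S_a,\,S_{\mathord{|}a})$, where $b=1$ if $[\varepsilon]_\alpha\in S$ and $b=0$ otherwise, $S_a=\{[w]_\alpha:[aw]_\alpha\in S\}$, and $S_{\mathord{|}a}=\langle a\rangle\{[w]_\alpha:[\mathord{|}a\,w]_\alpha\in S\}$ for any $a$ fresh for $S$.
   Context: Fix a countably infinite set $\mathbb{A}$ of names; $\mathsf{Nom}$ is the category of nominal sets and equivariant maps; $2=\{0,1\}$ with trivial action; $X^{\mathbb{A}}$ is the exponential (finitely supported functions). $[\mathbb{A}]X=(\mathbb{A}\times X)/\sim$ with $(a,x)\sim(b,y)$ iff $(a\,c)\cdot x=(b\,c)\cdot y$ for fresh $c$; classes $\langle a\rangle x$. $\mathcal{P}_{\mathsf{fs}}Y$ is the nominal set of finitely supported subsets of $Y$; $a$ fresh for $S$ means $a$ not in the least support of $S$. Bar strings are words over $\overline{\mathbb{A}}=\mathbb{A}\cup\{\mathord{|}a:a\in\mathbb{A}\}$ (pointwise action); $=_\alpha$ is the least equivalence relation with $x\,\mathord{|}a\,v=_\alpha x\,\mathord{|}b\,w$ whenever $\langle a\rangle v=\langle b\rangle w$ (i.e. $a=b,v=w$, or $b$ fresh for $v$ and $(a\,b)\cdot v=w$); $[w]_\alpha$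 denotes classes, with action $\pi\cdot[w]_\alpha=[\pi\cdot w]_\alpha$. *)

From Stdlib Require Import Arith List Lia Classical ClassicalEpsilon
  FunctionalExtensionality PropExtensionality ProofIrrelevance.
From Stdlib Require Import Relations.Relation_Operators.
Import ListNotations.
Set Implicit Arguments.

Record perm := Perm {
  pf : nat -> nat;
  pinv : nat -> nat;
  pfK : forall a, pinv (pf a) = a;
  pinvK : forall a, pf (pinv a) = a;
  pfin : exists l : list nat, forall a, ~ In a l -> pf a = a }.

Lemma perm_ext (p q : perm) : (forall a, pf p a = pf q a) -> p = q.
Proof.
  destruct p as [f g fK gK fin], q as [f' g' fK' gK' fin']; simpl; intro H.
  assert (Ef : f = f') by (apply functional_extensionality; exact H). subst f'.
  assert (Eg : g = g').
  { apply functional_extensionality; intro a.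
    rewrite <- (gK' a) at 1. rewrite fK. reflexivity. }
  subst g'.
  rewrite (proof_irrelevance _ fK fK'), (proof_irrelevance _ gK gK'),
    (proof_irrelevance _ fin fin'). reflexivity.
Qed.

Definition perm_id : perm.
Proof.
  refine (@Perm (fun a => a) (fun a => a) (fun a => eq_refl) (fun a => eq_refl) _).
  exists []. auto.
Defined.

Definition perm_comp (p q : perm) : perm.
Proof.
  refine (@Perm (fun a => pf p (pf q a)) (fun a => pinv q (pinv p a)) _ _ _).
  - intro a. rewrite !pfK. reflexivity.
  - intro a. rewrite !pinvK. reflexivity.
  - destruct (pfin p) as [l1 H1], (pfin q) as [l2 H2].
    exists (l1 ++ l2). intros a Ha.
    rewrite H2, H1; auto; intro; apply Ha; apply in_or_app; auto.
Defined.

Definition perm_inv (p : perm) : perm.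
Proof.
  refine (@Perm (pinv p) (pf p) (pinvK p) (pfK p) _).
  destruct (pfin p) as [l H]. exists l. intros a Ha.
  rewrite <- (H a Ha) at 1. apply pfK.
Defined.

Definition swapf (a b x : nat) : nat :=
  if Nat.eqb x a then b else if Nat.eqb x b then a else x.

Lemma swapf_invol a b x : swapf a b (swapf a b x) = x.
Proof.
  unfold swapf.
  destruct (Nat.eqb_spec x a) as [->|Hxa].
  - destruct (Nat.eqb_spec b a) as [->|Hba]; [reflexivity|].
    rewrite Nat.eqb_refl. reflexivity.
  - destruct (Nat.eqb_spec x b) as [->|Hxb].
    + rewrite Nat.eqb_refl. reflexivity.
    + destruct (Nat.eqb_spec x a); [congruence|].
      destruct (Nat.eqb_spec x b); [congruence|]. reflexivity.
Qed.

Definition swap (a b : nat) : perm.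
Proof.
  refine (@Perm (swapf a b) (swapf a b) (swapf_invol a b) (swapf_invol a b) _).
  exists [a; b]. intros x Hx. unfold swapf.
  destruct (Nat.eqb_spec x a); [subst; exfalso; apply Hx; simpl; auto|].
  destruct (Nat.eqb_spec x b); [subst; exfalso; apply Hx; simpl; auto|].
  reflexivity.
Defined.

Section Support.
Variables (T : Type) (act : perm -> T -> T).

Definition supports (l : list nat) (x : T) : Prop :=
  forall p : perm, (forall a, In a l -> pf p a = a) -> act p x = x.

Definition in_least_supp (a : nat) (x : T) : Prop :=
  forall l, supports l x -> In a l.

Definition fresh (a : nat) (x : T) : Prop := ~ in_least_supp a x.

Definition finitely_supported (x : T) : Prop := exists l, supports l x.

Definition equivariant_act_laws : Prop :=
  (forall x, act perm_id x = x) /\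
  (forall p q x, act (perm_comp p q) x = act p (act q x)).

Lemma supports_act (Hl : equivariant_act_laws) l x p :
  supports l x -> supports (map (pf p) l) (act p x).
Proof.
  destruct Hl as [_ Hc]. intros H s Hs.
  set (t := perm_comp (perm_inv p) (perm_comp s p)).
  assert (Ht : act t x = x).
  { apply H. intros a Ha. unfold t; simpl.
    rewrite (Hs (pf p a)) by (apply in_map; exact Ha). apply pfK. }
  assert (E : perm_comp s p = perm_comp p t).
  { apply perm_ext. intro a. unfold t; simpl. rewrite pinvK. reflexivity. }
  rewrite <- Hc, E, Hc, Ht. reflexivity.
Qed.
End Support.

Definition equivariant {A B : Type} (actA : perm -> A -> A) (actB : perm -> B -> B)
  (f : A -> B) : Prop :=
  forall p x, f (actA p x) = actB p (f x).

Lemma sig_ext {A : Type} (P : A -> Prop) (x y : sig P) :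
  proj1_sig x = proj1_sig y -> x = y.
Proof.
  destruct x as [x Hx], y as [y Hy]; simpl; intro E; subst y.
  rewrite (proof_irrelevance _ Hx Hy). reflexivity.
Qed.

Record nominal := Nominal {
  car :> Type;
  nact : perm -> car -> car;
  nact_id : forall x, nact perm_id x = x;
  nact_comp : forall p q x, nact (perm_comp p q) x = nact p (nact q x);
  nact_fs : forall x, finitely_supported nact x }.

Lemma nominal_laws (X : nominal) : equivariant_act_laws (nact X).
Proof. split; [apply nact_id | apply nact_comp]. Qed.

Record emap (X Y : nominal) := EMap {
  emap_fun :> X -> Y;
  emap_eqv : equivariant (nact X) (nact Y) emap_fun }.

Section Exponential.
Variable X : nominal.

Definition fun_raw_act (p : perm) (f : nat -> X) : nat -> X :=
  fun a => nact X p (f (pinv p a)).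

Lemma fun_raw_laws : equivariant_act_laws fun_raw_act.
Proof.
  split; intros; unfold fun_raw_act; apply functional_extensionality; intro a.
  - apply nact_id.
  - simpl. apply nact_comp.
Qed.

Definition Fun : Type := { f : nat -> X | finitely_supported fun_raw_act f }.

Definition fun_act (p : perm) (f : Fun) : Fun.
Proof.
  refine (exist _ (fun_raw_act p (proj1_sig f)) _).
  destruct (proj2_sig f) as [l Hl].
  exists (map (pf p) l). apply supports_act; [apply fun_raw_laws | exact Hl].
Defined.
End Exponential.

Definition fun_map (X Y : nominal) (h : emap X Y) (f : Fun X) : Fun Y.
Proof.
  refine (exist _ (fun a => h (proj1_sig f a)) _).
  destruct (proj2_sig f) as [l Hl]. exists l. intros p Hp.
  unfold fun_raw_act. apply functional_extensionality; intro a.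
  rewrite <- (emap_eqv h).
  change (nact X p (proj1_sig f (pinv p a))) with (fun_raw_act X p (proj1_sig f) a).
  rewrite (Hl p Hp). reflexivity.
Defined.

Section Abstraction.
Variable X : nominal.

Definition abs_rel (u v : nat * X) : Prop :=
  let (a, x) := u in let (b, y) := v in
  exists c, c <> a /\ c <> b /\ fresh (nact X) c x /\ fresh (nact X) c y /\
    nact X (swap a c) x = nact X (swap b c) y.

Definition abs_class (a : nat) (x : X) : nat * X -> Prop := abs_rel (a, x).

Definition Abs : Type :=
  { C : nat * X -> Prop | exists a x, C = abs_class a x }.

Definition abs_elem (a : nat) (x : X) : Abs :=
  exist _ (abs_class a x) (ex_intro _ a (ex_intro _ x eq_refl)).

Definition abs_rep (C : Abs) : nat * X :=
  let (a, Ha) := constructive_indefinite_description _ (proj2_sig C) in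
  let (x, _) := constructive_indefinite_description _ Ha in (a, x).

Definition abs_act (p : perm) (C : Abs) : Abs :=
  let (a, x) := abs_rep C in abs_elem (pf p a) (nact X p x).
End Abstraction.

Definition abs_map (X Y : nominal) (h : emap X Y) (C : Abs X) : Abs Y :=
  let (a, x) := abs_rep C in abs_elem Y a (h x).

Definition G (X : nominal) : Type := (bool * Fun X * Abs X)%type.

Definition gb {X : nominal} (u : G X) : bool := fst (fst u).
Definition gf {X : nominal} (u : G X) : Fun X := snd (fst u).
Definition ga {X : nominal} (u : G X) : Abs X := snd u.

Definition G_act (X : nominal) (p : perm) (u : G X) : G X :=
  (gb u, fun_act p (gf u), abs_act p (ga u)).

Definition G_map (X Y : nominal) (h : emap X Y) (u : G X) : G Y :=
  (gb u, fun_map h (gf u), abs_map h (ga u)).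

Inductive barletter : Type :=
| Plain : nat -> barletter
| Bar : nat -> barletter.

Definition word : Type := list barletter.

Definition letter_act (p : perm) (l : barletter) : barletter :=
  match l with Plain a => Plain (pf p a) | Bar a => Bar (pf p a) end.

Definition word_act (p : perm) (w : word) : word := map (letter_act p) w.

(* generating step:  x |a v  =  x |b w   whenever  <a>v = <b>w, i.e.
   a = b and v = w, or b fresh for v and (a b).v = w *)
Definition alpha_step (u u' : word) : Prop :=
  exists (x : word) (a b : nat) (v w : word),
    u = x ++ Bar a :: v /\ u' = x ++ Bar b :: w /\
    ((a = b /\ v = w) \/ (fresh word_act b v /\ word_act (swap a b) v = w)).

Definition alpha_eq : word -> word -> Prop := clos_refl_sym_trans word alpha_step.

Definition alpha_class (w : word) : word -> Prop := alpha_eq w.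

Definition AlphaCl : Type := { C : word -> Prop | exists w, C = alpha_class w }.

Definition cls (w : word) : AlphaCl :=
  exist _ (alpha_class w) (ex_intro _ w eq_refl).

Definition cls_rep (C : AlphaCl) : word :=
  proj1_sig (constructive_indefinite_description _ (proj2_sig C)).

Definition cls_act (p : perm) (C : AlphaCl) : AlphaCl :=
  cls (word_act p (cls_rep C)).

Lemma word_act_id w : word_act perm_id w = w.
Proof. unfold word_act. induction w as [|[] w IH]; simpl; congruence. Qed.

Lemma word_act_comp p q w : word_act (perm_comp p q) w = word_act p (word_act q w).
Proof. unfold word_act. induction w as [|[] w IH]; simpl; congruence. Qed.

Lemma word_laws : equivariant_act_laws word_act.
Proof. split; [apply word_act_id | apply word_act_comp]. Qed.

Lemma word_act_app p x y : word_act p (x ++ y) = word_act p x ++ word_act p y.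
Proof. apply map_app. Qed.

Lemma fresh_act (T : Type) (act : perm -> T -> T) (Hl : equivariant_act_laws act)
  p a x : fresh act a x -> fresh act (pf p a) (act p x).
Proof.
  unfold fresh, in_least_supp. intros H1 H2. apply H1. intros l Hs.
  pose proof (H2 _ (supports_act Hl p Hs)) as Hin.
  apply in_map_iff in Hin. destruct Hin as [b [Eb Hb]].
  assert (b = a) by (rewrite <- (pfK p b), Eb, pfK; reflexivity). subst; exact Hb.
Qed.

Lemma perm_comp_swap p a b :
  perm_comp p (swap a b) = perm_comp (swap (pf p a) (pf p b)) p.
Proof.
  apply perm_ext; intro x; simpl; unfold swapf.
  assert (inj : forall u v, pf p u = pf p v -> u = v)
    by (intros u v E; rewrite <- (pfK p u), E, pfK; reflexivity).
  destruct (Nat.eqb_spec x a); subst.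
  - destruct (Nat.eqb_spec (pf p a) (pf p a)); [reflexivity | congruence].
  - destruct (Nat.eqb_spec x b); subst.
    + destruct (Nat.eqb_spec (pf p b) (pf p a)).
      * apply inj in e; subst; reflexivity.
      * destruct (Nat.eqb_spec (pf p b) (pf p b)); congruence.
    + destruct (Nat.eqb_spec (pf p x) (pf p a)); [apply inj in e; congruence|].
      destruct (Nat.eqb_spec (pf p x) (pf p b)); [apply inj in e; congruence|].
      reflexivity.
Qed.

Lemma alpha_step_act p u u' : alpha_step u u' ->
  alpha_step (word_act p u) (word_act p u').
Proof.
  intros (x & a & b & v & w & -> & -> & H).
  exists (word_act p x), (pf p a), (pf p b), (word_act p v), (word_act p w).
  rewrite !word_act_app. split; [reflexivity|]. split; [reflexivity|].
  destruct H as [[-> ->] | [Hf Hw]]; [left; auto | right]. split.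
  - apply fresh_act; [apply word_laws | exact Hf].
  - rewrite <- Hw, <- !word_act_comp, perm_comp_swap. reflexivity.
Qed.

Lemma alpha_eq_act p u u' : alpha_eq u u' -> alpha_eq (word_act p u) (word_act p u').
Proof.
  induction 1.
  - apply rst_step, alpha_step_act; assumption.
  - apply rst_refl.
  - apply rst_sym; assumption.
  - eapply rst_trans; eassumption.
Qed.

Lemma alpha_class_eq u u' : alpha_eq u u' -> alpha_class u = alpha_class u'.
Proof.
  intro H. apply functional_extensionality; intro v. apply propositional_extensionality.
  unfold alpha_class; split; intro H'.
  - eapply rst_trans; [apply rst_sym; exact H | exact H'].
  - eapply rst_trans; [exact H | exact H'].
Qed.

Lemma cls_rep_spec C : proj1_sig C = alpha_class (cls_rep C).
Proof.
  unfold cls_rep. destruct (constructive_indefinite_description _ _). exact e.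
Qed.

Lemma cls_rep_cls w : alpha_eq w (cls_rep (cls w)).
Proof.
  pose proof (cls_rep_spec (cls w)) as E. simpl in E.
  change (alpha_class w (cls_rep (cls w))). rewrite E. apply rst_refl.
Qed.

Lemma cls_act_id C : cls_act perm_id C = C.
Proof.
  apply sig_ext. unfold cls_act; simpl. rewrite word_act_id, <- cls_rep_spec.
  reflexivity.
Qed.

Lemma cls_act_comp p q C : cls_act (perm_comp p q) C = cls_act p (cls_act q C).
Proof.
  apply sig_ext. unfold cls_act; simpl. rewrite word_act_comp.
  apply alpha_class_eq, alpha_eq_act, cls_rep_cls.
Qed.

Definition set_raw_act (p : perm) (S : AlphaCl -> Prop) : AlphaCl -> Prop :=
  fun c => S (cls_act (perm_inv p) c).

Lemma set_raw_laws : equivariant_act_laws set_raw_act.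
Proof.
  split; intros; unfold set_raw_act; apply functional_extensionality; intro c.
  - replace (perm_inv perm_id) with perm_id by (apply perm_ext; reflexivity).
    rewrite cls_act_id. reflexivity.
  - replace (perm_inv (perm_comp p q)) with (perm_comp (perm_inv q) (perm_inv p))
      by (apply perm_ext; reflexivity).
    rewrite cls_act_comp. reflexivity.
Qed.

Definition Zcar : Type :=
  { S : AlphaCl -> Prop | finitely_supported set_raw_act S }.

Definition Z_act (p : perm) (S : Zcar) : Zcar.
Proof.
  refine (exist _ (set_raw_act p (proj1_sig S)) _).
  destruct (proj2_sig S) as [l Hl].
  exists (map (pf p) l). apply supports_act; [apply set_raw_laws | exact Hl].
Defined.

Definition Z : nominal.
Proof.
  refine (@Nominal Zcar Z_act _ _ _).
  - intro S. apply sig_ext. simpl. apply (proj1 set_raw_laws).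
  - intros p q S. apply sig_ext. simpl. apply (proj2 set_raw_laws).
  - intro S. destruct (proj2_sig S) as [l Hl]. exists l. intros p Hp.
    apply sig_ext. simpl. apply Hl; exact Hp.
Defined.

Definition mem (S : Z) (c : AlphaCl) : Prop := proj1_sig S c.

(* For a coalgebra [c], a state
   [x] accepts the empty word if its bit is set, [a w] if its [a]-successor accepts [w],
   and [|a w] if [ga (c x) = <a>y] for some [y] accepting [w].  Mapping [x] to the
   alpha-classes of the words it accepts is equivariant (because [c] is) and is a
   coalgebra morphism by alpha-inversion: alpha-equivalent words have the same head
   letter, and alpha-equivalent tails once a leading bar is renamed on both sides to a
   common fresh name.  Any morphism is determined by the empty-word bit and the
   derivatives, and a leading bar may be renamed to a name fresh for the language, so
   uniqueness follows by induction on the length of words. *)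

From Stdlib Require Import List Arith Lia Classical ClassicalEpsilon
  FunctionalExtensionality PropExtensionality.
From Stdlib Require Import Relations.Relation_Operators.
Import ListNotations.
Set Implicit Arguments.

Ltac swap_cases :=
  unfold swapf in *; repeat (match goal with
   | |- context [Nat.eqb ?x ?y] => destruct (Nat.eqb_spec x y)
   | H : context [Nat.eqb ?x ?y] |- _ => destruct (Nat.eqb_spec x y) end; subst);
  try congruence.

Ltac notin := let H' := fresh in intro H';
  match goal with H : ~ _ |- _ => apply H; clear - H';
  simpl in *; repeat rewrite in_app_iff in *; simpl in *; try subst; solve [intuition] end.

Lemma pf_inj p u v : pf p u = pf p v -> u = v.
Proof. intro E; rewrite <- (pfK p u), E, pfK; reflexivity. Qed.

Lemma perm_comp_inv_r p : perm_comp p (perm_inv p) = perm_id.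
Proof. apply perm_ext; intro y; apply pinvK. Qed.

Lemma perm_comp_inv_l p : perm_comp (perm_inv p) p = perm_id.
Proof. apply perm_ext; intro y; apply pfK. Qed.

Lemma swap_fix a b y : y <> a -> y <> b -> pf (swap a b) y = y.
Proof. intros; simpl; swap_cases. Qed.

Lemma swap_l a b : pf (swap a b) a = b.
Proof. simpl; swap_cases. Qed.

Lemma swap_r a b : pf (swap a b) b = a.
Proof. simpl; swap_cases. Qed.

Lemma swap_same a : swap a a = perm_id.
Proof. apply perm_ext; intro y; simpl; swap_cases. Qed.

Lemma swap_invol a b : perm_comp (swap a b) (swap a b) = perm_id.
Proof. apply perm_ext; intro y; apply swapf_invol. Qed.

Lemma swap_conj a c f : a <> c -> a <> f -> c <> f ->
  perm_comp (swap c f) (swap a c) = perm_comp (swap a f) (swap c f).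
Proof. intros; apply perm_ext; intro y; simpl; swap_cases. Qed.

Lemma swap_through a b g : a <> b -> g <> a -> g <> b ->
  swap a b = perm_comp (swap a g) (perm_comp (swap b g) (swap a g)).
Proof. intros; apply perm_ext; intro y; simpl; swap_cases. Qed.

Lemma fresh_nat (l : list nat) : exists g, ~ In g l.
Proof.
  exists (S (list_max l)); intro H.
  assert (Hle := proj1 (list_max_le l (list_max l)) (le_n _)).
  rewrite Forall_forall in Hle; specialize (Hle _ H); lia.
Qed.

Section Freshness.
Variables (T : Type) (act : perm -> T -> T).

Lemma fresh_supports a x : fresh act a x -> exists l, supports act l x /\ ~ In a l.
Proof.
  intro H. apply NNPP; intro N. apply H. intros l Hl. apply NNPP; intro N2.
  apply N; eauto.
Qed.

Lemma supports_fresh l a x : supports act l x -> ~ In a l -> fresh act a x.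
Proof. intros Hs Hn Hl. exact (Hn (Hl l Hs)). Qed.

Lemma supports_swap l a b x : supports act l x -> ~ In a l -> ~ In b l ->
  act (swap a b) x = x.
Proof. intros Hs Ha Hb. apply Hs. intros y Hy. apply swap_fix; intro; subst; auto. Qed.

Hypothesis act_laws : equivariant_act_laws act.

Lemma fresh_swap a b x : fresh act a x -> fresh act b x -> act (swap a b) x = x.
Proof.
  intros Fa Fb. destruct (Nat.eq_dec a b) as [<-|Nab].
  { rewrite swap_same. apply (proj1 act_laws). }
  destruct (fresh_supports Fa) as [l1 [H1 N1]], (fresh_supports Fb) as [l2 [H2 N2]].
  destruct (fresh_nat (a :: b :: l1 ++ l2)) as [g Hg].
  assert (g <> a) by notin. assert (g <> b) by notin.
  assert (G1 : ~ In g l1) by notin. assert (G2 : ~ In g l2) by notin.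
  rewrite (@swap_through a b g) by auto. rewrite !(proj2 act_laws).
  rewrite (supports_swap _ _ H1 N1 G1), (supports_swap _ _ H2 N2 G2),
    (supports_swap _ _ H1 N1 G1).
  reflexivity.
Qed.

Lemma act_inv_l p x : act (perm_inv p) (act p x) = x.
Proof. rewrite <- (proj2 act_laws), perm_comp_inv_l. apply (proj1 act_laws). Qed.

Lemma act_inv_r p x : act p (act (perm_inv p) x) = x.
Proof. rewrite <- (proj2 act_laws), perm_comp_inv_r. apply (proj1 act_laws). Qed.

Lemma act_swap_invol a b x : act (swap a b) (act (swap a b) x) = x.
Proof. rewrite <- (proj2 act_laws), swap_invol. apply (proj1 act_laws). Qed.
End Freshness.

Lemma equivariant_fresh (A B : Type) (actA : perm -> A -> A) (actB : perm -> B -> B)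
  f a x : equivariant actA actB f -> fresh actA a x -> fresh actB a (f x).
Proof.
  intros E F. destruct (fresh_supports F) as [l [Hs Hn]].
  apply (supports_fresh (l := l)); auto. intros p Hp. rewrite <- E, Hs; auto.
Qed.

Definition suppl (X : nominal) (x : X) : list nat :=
  proj1_sig (constructive_indefinite_description _ (nact_fs X x)).
Arguments suppl {X} x.

Lemma suppl_spec (X : nominal) (x : X) : supports (nact X) (suppl x) x.
Proof. unfold suppl. destruct (constructive_indefinite_description _ _); auto. Qed.

Lemma suppl_fresh (X : nominal) (x : X) a : ~ In a (suppl x) -> fresh (nact X) a x.
Proof. apply supports_fresh, suppl_spec. Qed.
Arguments suppl_fresh {X x a}.

Lemma nact_swap_fresh (X : nominal) a b (x : X) :
  fresh (nact X) a x -> fresh (nact X) b x -> nact X (swap a b) x = x.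
Proof. apply fresh_swap, nominal_laws. Qed.
Arguments nact_swap_fresh {X a b x}.

Lemma nact_fresh_act (X : nominal) p a (x : X) :
  fresh (nact X) a x -> fresh (nact X) (pf p a) (nact X p x).
Proof. apply fresh_act, nominal_laws. Qed.
Arguments nact_fresh_act {X} p {a x}.

Lemma fresh_pick {X : nominal} (L : list nat) (xs : list X) :
  exists f, ~ In f L /\ Forall (fun x => fresh (nact X) f x) xs.
Proof.
  destruct (fresh_nat (L ++ flat_map (@suppl X) xs)) as [f Hf].
  exists f. split; [notin|].
  apply Forall_forall. intros x Hx. apply suppl_fresh. intro H; apply Hf.
  apply in_or_app; right. apply in_flat_map; eauto.
Qed.

(** * Name abstraction *)

Section Abstraction.
Variable X : nominal.
Notation act := (nact X).

Lemma abs_rel_swap_fresh a b (x y : X) : abs_rel X (a, x) (b, y) ->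
  forall f, f <> a -> f <> b -> fresh act f x -> fresh act f y ->
  act (swap a f) x = act (swap b f) y.
Proof.
  intros (c & Ca & Cb & Fx & Fy & E) f Fa Fb Gx Gy.
  destruct (Nat.eq_dec f c) as [->|Nfc]; [exact E|].
  rewrite <- (nact_swap_fresh Fx Gx), <- (nact_swap_fresh Fy Gy).
  rewrite <- !nact_comp, <- !swap_conj by auto.
  rewrite !nact_comp, E. reflexivity.
Qed.

Lemma abs_rel_refl a (x : X) : abs_rel X (a, x) (a, x).
Proof.
  destruct (fresh_pick [a] [x]) as [f [Hf HF]]. inversion HF; subst.
  exists f. repeat split; auto; notin.
Qed.

Lemma abs_rel_sym u v : abs_rel X u v -> abs_rel X v u.
Proof.
  destruct u as [a x], v as [b y]. intros (c & H1 & H2 & H3 & H4 & H5).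
  exists c; auto.
Qed.

Lemma abs_rel_trans u v w : abs_rel X u v -> abs_rel X v w -> abs_rel X u w.
Proof.
  destruct u as [a x], v as [b y], w as [d z]. intros H1 H2.
  destruct (fresh_pick [a; b; d] [x; y; z]) as [f [Hf HF]].
  inversion HF as [|? ? Fx HF2]; inversion HF2 as [|? ? Fy HF3];
    inversion HF3 as [|? ? Fz _]; subst.
  assert (f <> a) by notin. assert (f <> b) by notin. assert (f <> d) by notin.
  exists f. repeat split; auto.
  rewrite (abs_rel_swap_fresh H1 (f:=f)), (abs_rel_swap_fresh H2 (f:=f)); auto.
Qed.

Lemma abs_elem_eq a b (x y : X) :
  abs_elem X a x = abs_elem X b y <-> abs_rel X (a, x) (b, y).
Proof.
  split.
  - intro E. apply (f_equal (@proj1_sig _ _)) in E. simpl in E. unfold abs_class in E.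
    rewrite E. apply abs_rel_refl.
  - intro H. apply sig_ext, functional_extensionality; intro u.
    apply propositional_extensionality; split; intro H'.
    + eapply abs_rel_trans; [apply abs_rel_sym; exact H | exact H'].
    + eapply abs_rel_trans; [exact H | exact H'].
Qed.

Lemma abs_elem_inj a (x y : X) : abs_elem X a x = abs_elem X a y -> x = y.
Proof.
  intro E. apply abs_elem_eq in E. destruct E as (c & _ & _ & _ & _ & E).
  rewrite <- (act_swap_invol (nominal_laws X) a c x), E.
  apply act_swap_invol, nominal_laws.
Qed.

Lemma abs_rename a b (x : X) : fresh act b x ->
  abs_elem X a x = abs_elem X b (act (swap a b) x).
Proof.
  intro Fb. destruct (Nat.eq_dec a b) as [<-|Nab].
  { rewrite swap_same, nact_id. reflexivity. }
  apply abs_elem_eq.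
  destruct (fresh_pick [a; b] [x]) as [c [Hc HF]]. inversion HF; subst.
  assert (c <> a) by notin. assert (c <> b) by notin.
  exists c. repeat split; auto.
  - rewrite <- (@swap_fix a b c) by auto. apply nact_fresh_act; auto.
  - rewrite <- nact_comp, swap_conj, nact_comp, (nact_swap_fresh Fb); auto.
Qed.

Lemma abs_rel_act p a b (x y : X) : abs_rel X (a, x) (b, y) ->
  abs_rel X (pf p a, act p x) (pf p b, act p y).
Proof.
  intros (c & Ca & Cb & Fx & Fy & E). exists (pf p c).
  repeat split; try (intro H; apply pf_inj in H; auto); try (apply nact_fresh_act; auto).
  rewrite <- !nact_comp, <- !perm_comp_swap, !nact_comp, E. reflexivity.
Qed.

Lemma abs_rep_spec (C : Abs X) : C = abs_elem X (fst (abs_rep C)) (snd (abs_rep C)).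
Proof.
  unfold abs_rep. destruct (constructive_indefinite_description _ (proj2_sig C)) as [a Ha].
  destruct (constructive_indefinite_description _ Ha) as [x Hx].
  apply sig_ext. exact Hx.
Qed.

Lemma abs_act_elem p a (x : X) :
  abs_act p (abs_elem X a x) = abs_elem X (pf p a) (act p x).
Proof.
  unfold abs_act. pose proof (abs_rep_spec (abs_elem X a x)) as E.
  destruct (abs_rep (abs_elem X a x)) as [a' x']. simpl in E.
  apply abs_elem_eq in E. apply abs_elem_eq, abs_rel_act, abs_rel_sym, E.
Qed.

Lemma abs_elem_fresh (C : Abs X) (L : list nat) :
  exists f y, ~ In f L /\ C = abs_elem X f y.
Proof.
  pose proof (abs_rep_spec C) as E. destruct (abs_rep C) as [a y]. simpl in E.
  destruct (fresh_pick L [y]) as [f [Hf HF]]. inversion HF; subst C.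
  exists f, (act (swap a f) y). split; auto. apply abs_rename; auto.
Qed.
End Abstraction.

Lemma abs_map_elem (X Y : nominal) (h : emap X Y) a (x : X) :
  abs_map h (abs_elem X a x) = abs_elem Y a (h x).
Proof.
  unfold abs_map. pose proof (abs_rep_spec (abs_elem X a x)) as E.
  destruct (abs_rep (abs_elem X a x)) as [a' x']. simpl in E.
  apply abs_elem_eq in E. apply abs_elem_eq.
  destruct E as (c & Ca & Cb & Fx & Fy & E). exists c.
  repeat split; auto; try (apply (equivariant_fresh (emap_eqv h)); auto).
  rewrite <- !(emap_eqv h), E. reflexivity.
Qed.

(** * Alpha-equivalence of bar strings *)

Definition letter_name (l : barletter) : nat := match l with Plain a => a | Bar a => a end.
Definition atoms (w : word) : list nat := map letter_name w.

Lemma atoms_act p w : atoms (word_act p w) = map (pf p) (atoms w).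
Proof. induction w as [|[] w IH]; simpl; congruence. Qed.

Lemma supports_atoms w : supports word_act (atoms w) w.
Proof. intros p Hp. induction w as [|[a|a] w IH]; simpl in *; auto; rewrite Hp, IH; auto. Qed.

Lemma fresh_word b w : fresh word_act b w <-> ~ In b (atoms w).
Proof.
  split; [|apply supports_fresh, supports_atoms].
  intros F Hin. destruct (fresh_supports F) as [l [Hs Hn]].
  destruct (fresh_nat (b :: l ++ atoms w)) as [g Hg].
  assert (E : word_act (swap b g) w = w).
  { apply Hs. intros y Hy. apply swap_fix; intro; subst; [exact (Hn Hy) | apply Hg; simpl; rewrite in_app_iff; auto]. }
  apply Hg; simpl; right; apply in_or_app; right.
  rewrite <- E, atoms_act. apply in_map_iff; exists b; split; [apply swap_l | exact Hin].
Qed.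

Lemma word_swap_fix a b w : ~ In a (atoms w) -> ~ In b (atoms w) ->
  word_act (swap a b) w = w.
Proof. apply supports_swap, supports_atoms. Qed.

Lemma word_inv_l p w : word_act (perm_inv p) (word_act p w) = w.
Proof. apply act_inv_l, word_laws. Qed.

Lemma word_inv_r p w : word_act p (word_act (perm_inv p) w) = w.
Proof. apply act_inv_r, word_laws. Qed.

Lemma alpha_cons l w w' : alpha_eq w w' -> alpha_eq (l :: w) (l :: w').
Proof.
  induction 1 as [u u' H| | |]; [|apply rst_refl | apply rst_sym | eapply rst_trans]; eauto.
  apply rst_step. destruct H as (x & a & b & v & w & -> & -> & H).
  exists (l :: x), a, b, v, w. auto.
Qed.

Lemma alpha_bar_rename a f w : ~ In f (atoms w) ->
  alpha_eq (Bar a :: w) (Bar f :: word_act (swap a f) w).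
Proof.
  intro H. apply rst_step. exists [], a, f, w, (word_act (swap a f) w).
  repeat split; auto. right; split; auto. apply fresh_word; auto.
Qed.

(* Quantifying over all sufficiently fresh [f] makes this relation transitive, so it is
   an invariant of [alpha_eq]; that is how alpha-equivalence is inverted on a head letter. *)
Definition alpha_head (u u' : word) : Prop :=
  match u, u' with
  | [], [] => True
  | Plain a :: w, Plain b :: w' => a = b /\ alpha_eq w w'
  | Bar a :: w, Bar b :: w' => forall f, ~ In f (a :: b :: atoms w ++ atoms w') ->
      alpha_eq (word_act (swap a f) w) (word_act (swap b f) w')
  | _, _ => False
  end.

Lemma alpha_head_refl u : alpha_head u u.
Proof. destruct u as [|[a|a] w]; simpl; auto; intros; try split; auto; apply rst_refl. Qed.

Lemma alpha_head_sym u u' : alpha_head u u' -> alpha_head u' u.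
Proof.
  destruct u as [|[a|a] w], u' as [|[b|b] w']; simpl; auto.
  - intros [-> H]; split; auto; apply rst_sym; auto.
  - intros H f Hf. apply rst_sym, H. notin.
Qed.

Lemma alpha_head_trans u u' u'' : alpha_head u u' -> alpha_head u' u'' -> alpha_head u u''.
Proof.
  destruct u as [|[a|a] w], u' as [|[b|b] w'], u'' as [|[d|d] w'']; simpl; try tauto.
  - intros [-> H1] [-> H2]; split; auto; eapply rst_trans; eauto.
  - intros H1 H2 f Hf.
    destruct (fresh_nat ([a; b; d; f] ++ atoms w ++ atoms w' ++ atoms w'')) as [g Hg].
    assert (g <> a) by notin. assert (g <> d) by notin. assert (g <> f) by notin.
    assert (f <> a) by notin. assert (f <> d) by notin.
    assert (A := rst_trans _ _ _ _ _ (H1 g ltac:(notin)) (H2 g ltac:(notin))).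
    apply (alpha_eq_act (swap f g)) in A. rewrite <- !word_act_comp in A.
    rewrite (perm_comp_swap (swap f g) a g), (perm_comp_swap (swap f g) d g), !swap_r,
      !(@swap_fix f g a), !(@swap_fix f g d), !word_act_comp,
      (@word_swap_fix f g w), (@word_swap_fix f g w'') in A by (auto; notin).
    exact A.
Qed.

Lemma alpha_step_head u u' : alpha_step u u' -> alpha_head u u'.
Proof.
  intros (x & a & b & v & w & -> & -> & H). destruct x as [|[d|d] x]; simpl.
  - intros f Hf. destruct H as [[<- <-] | [Fb <-]]; [apply rst_refl|].
    apply fresh_word in Fb.
    destruct (Nat.eq_dec a b) as [<-|Nab].
    { rewrite swap_same, word_act_id. apply rst_refl. }
    rewrite <- word_act_comp, swap_conj, word_act_comp, (@word_swap_fix b f v);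
      [apply rst_refl | notin ..].
  - split; auto. apply rst_step. exists x, a, b, v, w. auto.
  - intros f _. apply rst_step, (alpha_step_act (swap d f)). exists x, a, b, v, w. auto.
Qed.

Lemma alpha_eq_head u u' : alpha_eq u u' -> alpha_head u u'.
Proof.
  induction 1; eauto using alpha_step_head, alpha_head_refl, alpha_head_sym,
    alpha_head_trans.
Qed.

Lemma alpha_nil w : alpha_eq [] w -> w = [].
Proof. intro H; apply alpha_eq_head in H; destruct w; simpl in H; tauto. Qed.

Lemma alpha_plain a w u : alpha_eq (Plain a :: w) u ->
  exists w', u = Plain a :: w' /\ alpha_eq w w'.
Proof.
  intro H; apply alpha_eq_head in H; destruct u as [|[b|b] w']; simpl in H; try tauto.
  destruct H as [<- H]; eauto.
Qed.

Lemma alpha_bar d w u : alpha_eq (Bar d :: w) u ->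
  exists e v, u = Bar e :: v /\ forall f, ~ In f (d :: e :: atoms w ++ atoms v) ->
      alpha_eq (word_act (swap d f) w) (word_act (swap e f) v).
Proof.
  intro H; apply alpha_eq_head in H; destruct u as [|[b|b] w']; simpl in H; try tauto.
  eauto.
Qed.

Lemma cls_eq w w' : cls w = cls w' <-> alpha_eq w w'.
Proof.
  split.
  - intro E. apply (f_equal (@proj1_sig _ _)) in E. simpl in E. unfold alpha_class in E.
    rewrite E. apply rst_refl.
  - intro H. apply sig_ext, alpha_class_eq, H.
Qed.

Lemma cls_act_cls p w : cls_act p (cls w) = cls (word_act p w).
Proof. apply cls_eq, alpha_eq_act, rst_sym, cls_rep_cls. Qed.

Lemma cls_pred_ext (P P' : AlphaCl -> Prop) :
  (forall u, P (cls u) <-> P' (cls u)) -> P = P'.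
Proof.
  intro H. apply functional_extensionality; intro C. apply propositional_extensionality.
  replace C with (cls (cls_rep C)) by (apply sig_ext; symmetry; apply cls_rep_spec).
  apply H.
Qed.

(** * The coalgebra of bar languages *)

Lemma mem_act p (S : Z) w : mem (nact Z p S) (cls w) = mem S (cls (word_act (perm_inv p) w)).
Proof. unfold mem; simpl; unfold set_raw_act. rewrite cls_act_cls. reflexivity. Qed.

Lemma Z_ext (S S' : Z) : (forall u, mem S (cls u) <-> mem S' (cls u)) -> S = S'.
Proof. intro H. apply sig_ext, cls_pred_ext, H. Qed.

Definition deriv_pred (S : Z) (l : barletter) : AlphaCl -> Prop :=
  fun c => exists w, c = cls w /\ mem S (cls (l :: w)).

Lemma deriv_pred_cls S l u : deriv_pred S l (cls u) <-> mem S (cls (l :: u)).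
Proof.
  split; [|intro H; exists u; auto].
  intros (w & E & H). apply cls_eq in E.
  rewrite (proj2 (cls_eq (l :: u) (l :: w)) (alpha_cons l E)). exact H.
Qed.

Lemma letter_inv p l : letter_act (perm_inv p) (letter_act p l) = l.
Proof. destruct l; simpl; rewrite pfK; reflexivity. Qed.

Lemma deriv_pred_act p S l :
  set_raw_act p (deriv_pred S l) = deriv_pred (nact Z p S) (letter_act p l).
Proof.
  apply cls_pred_ext; intro u. unfold set_raw_act.
  rewrite cls_act_cls, !deriv_pred_cls, mem_act. simpl. rewrite letter_inv. tauto.
Qed.

Lemma deriv_pred_supports (S : Z) l L : supports (nact Z) L S ->
  supports set_raw_act (letter_name l :: L) (deriv_pred S l).
Proof.
  intros Hs p Hp. rewrite deriv_pred_act, Hs by (intros; apply Hp; simpl; auto).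
  destruct l; simpl in *; rewrite Hp; auto.
Qed.

Lemma deriv_pred_fs S l : finitely_supported set_raw_act (deriv_pred S l).
Proof. destruct (nact_fs Z S) as [L HL]. eexists; apply deriv_pred_supports, HL. Qed.

Definition deriv (S : Z) (l : barletter) : Z := exist _ (deriv_pred S l) (deriv_pred_fs S l).

Lemma mem_deriv S l u : mem (deriv S l) (cls u) <-> mem S (cls (l :: u)).
Proof. apply deriv_pred_cls. Qed.

Lemma deriv_act p S l : nact Z p (deriv S l) = deriv (nact Z p S) (letter_act p l).
Proof. apply sig_ext, deriv_pred_act. Qed.

Lemma deriv_supports (S : Z) l L : supports (nact Z) L S ->
  supports (nact Z) (letter_name l :: L) (deriv S l).
Proof. intros Hs p Hp. apply sig_ext, (deriv_pred_supports l Hs); auto. Qed.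

Lemma plain_derivs_fs (S : Z) :
  finitely_supported (fun_raw_act Z) (fun a => deriv S (Plain a)).
Proof.
  destruct (nact_fs Z S) as [L HL]. exists L. intros p Hp.
  apply functional_extensionality; intro a. unfold fun_raw_act.
  rewrite deriv_act, HL by auto. simpl. rewrite pinvK. reflexivity.
Qed.

Definition plain_derivs (S : Z) : Fun Z :=
  exist _ (fun a => deriv S (Plain a)) (plain_derivs_fs S).

Definition bar_deriv (S : Z) (a : nat) : Abs Z := abs_elem Z a (deriv S (Bar a)).

Lemma bar_deriv_fresh (S : Z) a b :
  fresh (nact Z) a S -> fresh (nact Z) b S -> bar_deriv S a = bar_deriv S b.
Proof.
  intros Fa Fb. destruct (Nat.eq_dec a b) as [<-|Nab]; [reflexivity|].
  unfold bar_deriv. rewrite (@abs_rename Z a b).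
  - f_equal. rewrite deriv_act, (nact_swap_fresh Fa Fb). simpl.
    unfold swapf; rewrite Nat.eqb_refl. reflexivity.
  - destruct (fresh_supports Fb) as [L [HL HnL]].
    apply (supports_fresh (l := a :: L)); [apply (deriv_supports (Bar a) HL)|].
    simpl; intros [E|E]; auto.
Qed.

Definition fresh_for (S : Z) : nat :=
  proj1_sig (constructive_indefinite_description _ (fresh_nat (suppl S))).

Lemma fresh_for_spec S : fresh (nact Z) (fresh_for S) S.
Proof.
  unfold fresh_for. destruct (constructive_indefinite_description _ _).
  apply suppl_fresh; auto.
Qed.

Definition bool_of (P : Prop) : bool := if excluded_middle_informative P then true else false.

Lemma bool_of_true P : bool_of P = true <-> P.
Proof. unfold bool_of; destruct (excluded_middle_informative P); split; auto; congruence. Qed.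

Definition tau (S : Z) : G Z :=
  (bool_of (mem S (cls nil)), plain_derivs S, bar_deriv S (fresh_for S)).

Lemma tau_eqv : equivariant (nact Z) (@G_act Z) tau.
Proof.
  intros p S. unfold tau, G_act, gb, gf, ga; simpl. f_equal; [f_equal|].
  - change (set_raw_act p (proj1_sig S) (cls [])) with (mem (nact Z p S) (cls [])).
    rewrite mem_act. reflexivity.
  - apply sig_ext, functional_extensionality; intro a. simpl. unfold fun_raw_act.
    rewrite deriv_act. simpl. rewrite pinvK. reflexivity.
  - unfold bar_deriv at 2. rewrite abs_act_elem, deriv_act.
    apply (bar_deriv_fresh (S := nact Z p S)); [apply fresh_for_spec|].
    apply nact_fresh_act, fresh_for_spec.
Qed.

Lemma tau_bar (S : Z) a : fresh (nact Z) a S -> ga (tau S) = abs_elem Z a (deriv S (Bar a)).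
Proof. apply bar_deriv_fresh, fresh_for_spec. Qed.

(** * Finality *)

Section Final.
Variables (X : nominal) (c : X -> G X).
Hypothesis c_eqv : equivariant (nact X) (@G_act X) c.

Fixpoint accepts (x : X) (w : word) {struct w} : Prop :=
  match w with
  | [] => gb (c x) = true
  | Plain a :: w' => accepts (proj1_sig (gf (c x)) a) w'
  | Bar a :: w' => exists y, ga (c x) = abs_elem X a y /\ accepts y w'
  end.

Lemma accepts_act p x w : accepts x w -> accepts (nact X p x) (word_act p w).
Proof.
  revert x; induction w as [|[a|a] w IH]; intros x H; simpl in *; rewrite c_eqv.
  - exact H.
  - unfold G_act, gf; simpl. unfold fun_raw_act. rewrite pfK. apply IH, H.
  - destruct H as [y [E H]]. exists (nact X p y). unfold G_act, ga; simpl.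
    split; [|apply IH, H]. unfold ga in E. rewrite E. apply abs_act_elem.
Qed.

Lemma accepts_act_iff p x w : accepts (nact X p x) (word_act p w) <-> accepts x w.
Proof.
  split; [|apply accepts_act]. intro H. apply (accepts_act (perm_inv p)) in H.
  rewrite act_inv_l, word_inv_l in H; auto. apply nominal_laws.
Qed.

Definition lang_pred (x : X) : AlphaCl -> Prop :=
  fun C => exists w, C = cls w /\ accepts x w.

Lemma lang_pred_cls x u : lang_pred x (cls u) <-> exists w, alpha_eq u w /\ accepts x w.
Proof. split; intros [w [E H]]; exists w; split; auto; apply cls_eq; auto. Qed.

Lemma lang_pred_act p x : set_raw_act p (lang_pred x) = lang_pred (nact X p x).
Proof.
  apply cls_pred_ext; intro u. unfold set_raw_act. rewrite cls_act_cls, !lang_pred_cls.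
  split; intros [w [E H]].
  - exists (word_act p w). split; [|apply accepts_act, H].
    apply (alpha_eq_act p) in E. rewrite word_inv_r in E. exact E.
  - exists (word_act (perm_inv p) w). split; [apply alpha_eq_act, E|].
    rewrite <- (accepts_act_iff p), word_inv_r. exact H.
Qed.

Lemma lang_pred_fs x : finitely_supported set_raw_act (lang_pred x).
Proof.
  destruct (nact_fs X x) as [L HL]. exists L. intros p Hp.
  rewrite lang_pred_act, HL; auto.
Qed.

Definition lang (x : X) : Z := exist _ (lang_pred x) (lang_pred_fs x).

Lemma lang_eqv : equivariant (nact X) (nact Z) lang.
Proof. intros p x. apply sig_ext. symmetry. apply lang_pred_act. Qed.

Definition lang_map : emap X Z := @EMap X Z lang lang_eqv.

Lemma mem_lang x u : mem (lang x) (cls u) <-> exists w, alpha_eq u w /\ accepts x w.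
Proof. apply lang_pred_cls. Qed.

Lemma lang_nil x : bool_of (mem (lang x) (cls nil)) = gb (c x).
Proof.
  destruct (gb (c x)) eqn:Eg.
  - apply bool_of_true, mem_lang. exists []. split; [apply rst_refl | exact Eg].
  - unfold bool_of. destruct (excluded_middle_informative _) as [H|H]; auto.
    apply mem_lang in H. destruct H as [w [Hw H]]. apply alpha_nil in Hw. subst w.
    simpl in H. congruence.
Qed.

Lemma lang_deriv_plain x a : deriv (lang x) (Plain a) = lang (proj1_sig (gf (c x)) a).
Proof.
  apply Z_ext; intro u. rewrite mem_deriv, !mem_lang. split.
  - intros [v [Hv H]]. destruct (alpha_plain Hv) as (w' & -> & Hw). eauto.
  - intros [w [Hw H]]. exists (Plain a :: w). split; [apply alpha_cons|]; auto.
Qed.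

(* Acceptance of [|e v'] goes through some representative [<e>z] of the abstraction;
   renaming both [<e>z] and [<d>y] to a common fresh name transports it to [y]. *)
Lemma lang_deriv_bar x d y : ga (c x) = abs_elem X d y -> deriv (lang x) (Bar d) = lang y.
Proof.
  intro Exy. apply Z_ext; intro u. rewrite mem_deriv, !mem_lang. split.
  - intros [v [Hv Hacc]]. destruct (alpha_bar Hv) as (e & v' & -> & Hren).
    destruct Hacc as [z [Ez Hz]]. rewrite Exy in Ez.
    apply abs_elem_eq, abs_rel_sym in Ez.
    destruct (fresh_nat (d :: e :: atoms u ++ atoms v' ++ suppl z ++ suppl y)) as [f Hf].
    assert (Eswap : nact X (swap e f) z = nact X (swap d f) y).
    { apply (abs_rel_swap_fresh Ez); try notin; apply suppl_fresh; notin. }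
    apply (accepts_act (swap e f)) in Hz. rewrite Eswap in Hz.
    apply (accepts_act (swap d f)) in Hz.
    rewrite act_swap_invol in Hz by apply nominal_laws.
    exists (word_act (swap d f) (word_act (swap e f) v')). split; auto.
    assert (Hq := alpha_eq_act (swap d f) (Hren f ltac:(notin))).
    rewrite act_swap_invol in Hq by apply word_laws. exact Hq.
  - intros [w [Hw Hacc]]. exists (Bar d :: w). split; [apply alpha_cons, Hw|].
    exists y; auto.
Qed.

Lemma lang_morph x : tau (lang x) = G_map lang_map (c x).
Proof.
  unfold tau, G_map. f_equal; [f_equal|].
  - apply lang_nil.
  - apply sig_ext, functional_extensionality; intro a. apply lang_deriv_plain.
  - destruct (abs_elem_fresh (ga (c x)) (suppl (lang x))) as (f & y & Hf & E).
    rewrite E, abs_map_elem, (@bar_deriv_fresh (lang x) _ f);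
      [|apply fresh_for_spec | apply suppl_fresh; auto].
    unfold bar_deriv. f_equal. apply lang_deriv_bar, E.
Qed.

Section Uniqueness.
Variable k : emap X Z.
Hypothesis k_morph : forall x, tau (k x) = G_map k (c x).

Lemma morph_mem_nil x : mem (k x) (cls nil) <-> gb (c x) = true.
Proof.
  rewrite <- (bool_of_true (mem _ _)).
  change (bool_of (mem (k x) (cls nil))) with (gb (tau (k x))).
  rewrite k_morph. reflexivity.
Qed.

Lemma morph_deriv_plain x a : deriv (k x) (Plain a) = k (proj1_sig (gf (c x)) a).
Proof. exact (f_equal (fun u => proj1_sig (gf u) a) (k_morph x)). Qed.

Lemma morph_deriv_bar x d y : ga (c x) = abs_elem X d y -> fresh (nact Z) d (k x) ->
  deriv (k x) (Bar d) = k y.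
Proof.
  intros E Fd. apply (abs_elem_inj (a := d)).
  rewrite <- tau_bar, k_morph by exact Fd. unfold G_map, ga at 1; simpl.
  rewrite E. apply abs_map_elem.
Qed.
End Uniqueness.

Lemma morph_unique (k1 k2 : emap X Z) :
  (forall x, tau (k1 x) = G_map k1 (c x)) -> (forall x, tau (k2 x) = G_map k2 (c x)) ->
  forall x, k1 x = k2 x.
Proof.
  intros H1 H2.
  assert (M : forall n w x, length w <= n -> (mem (k1 x) (cls w) <-> mem (k2 x) (cls w))).
  { induction n as [|n IH]; intros w x Hl; destruct w as [|[a|d] w];
      try (simpl in Hl; lia); try (rewrite (morph_mem_nil H1), (morph_mem_nil H2); tauto).
    - rewrite <- !mem_deriv, (morph_deriv_plain H1), (morph_deriv_plain H2).
      apply IH. simpl in Hl; lia.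
    - destruct (abs_elem_fresh (ga (c x)) (d :: atoms w ++ suppl (k1 x) ++ suppl (k2 x)))
        as (f & y & Hf & E).
      rewrite (proj2 (cls_eq _ _) (@alpha_bar_rename d f w ltac:(notin))).
      rewrite <- !mem_deriv, (morph_deriv_bar H1 x E), (morph_deriv_bar H2 x E);
        try (apply suppl_fresh; notin).
      apply IH. unfold word_act. rewrite length_map. simpl in Hl; lia. }
  intro x. apply Z_ext; intro u. apply (M (length u)); auto.
Qed.
End Final.

Theorem proposition4p18 :
  exists tau : Z -> G Z,
    (* tau is a morphism of Nom, i.e. (Z, tau) is a G-coalgebra *)
    equivariant (nact Z) (@G_act Z) tau /\
    (* the structure map *)
    (forall S : Z,
       (gb (tau S) = true <-> mem S (cls nil)) /\
       (forall a : nat,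
          proj1_sig (proj1_sig (gf (tau S)) a) =
          (fun c => exists w, c = cls w /\ mem S (cls (Plain a :: w)))) /\
       (forall a : nat, fresh (nact Z) a S ->
          exists T : Z,
            proj1_sig T = (fun c => exists w, c = cls w /\ mem S (cls (Bar a :: w))) /\
            ga (tau S) = @abs_elem Z a T)) /\
    (* terminality *)
    (forall (X : nominal) (c : X -> G X),
       equivariant (nact X) (@G_act X) c ->
       exists h : emap X Z,
         (forall x, tau (h x) = G_map h (c x)) /\
         (forall h' : emap X Z,
            (forall x, tau (h' x) = G_map h' (c x)) -> forall x, h' x = h x)).
Proof.
  exists tau. split; [apply tau_eqv|]. split.
  - intro S. split; [apply bool_of_true|]. split; [reflexivity|].
    intros a Fa. exists (deriv S (Bar a)). split; [reflexivity | apply tau_bar, Fa].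
  - intros X c Hc. exists (lang_map Hc). split; [apply lang_morph|].
    intros h' Hh' x. apply (@morph_unique X c); auto. apply lang_morph.
Qed.
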